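(* Let $H=([n],E)$ be a hypergraph. Then $\Delta_H$ is connected if and only if for every pair of edges $F,F'\in E$ there is a sequence of edges $F=F_1,F_2,\dots,F_r=F'$ such that for each $1\le i\le r-1$, $F_i\cup F_{i+1}\ne[n]$ or $F_i\cap F_{i+1}=\emptyset$.
   Context: A hypergraph $H=([n],E)$ has edges that are nonempty subsets of $[n]$; standing assumptions: every vertex in some edge, no edge of size 1, no edge properly contained in another. The coloring complex $\Delta_H$ is the abstract simplicial complex whose vertices are the nonempty proper subsets of $[n]$ and whose faces are the chains $\emptyset\neq A_1\subsetneq\cdots\subsetneq A_l\neq[n]$ ($l\ge0$) such that, with $A_0=\emptyset$, $A_{l+1}=[n]$, some difference $A_i\setminus A_{i-1}$ ($1\le i\le l+1$) contains an edge of $H$. *)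

From mathcomp Require Import all_boot.
From Stdlib Require Import Relations.
Set Implicit Arguments. Unset Strict Implicit. Unset Printing Implicit Defensive.

Definition is_hypergraph (n : nat) (E : {set {set 'I_n}}) : Prop :=
  [/\ forall F, F \in E -> F != set0,
      forall x : 'I_n, exists2 F, F \in E & x \in F,
      forall F, F \in E -> #|F| != 1%N
    & forall F G, F \in E -> G \in E -> ~~ (F \proper G)].

(* A chain A_1 ⊊ ... ⊊ A_l (given as the sequence [:: A_1; ...; A_l]) is a
   face of the coloring complex Δ_H: all A_i are nonempty proper subsets,
   the chain is strictly increasing, and with A_0 = ∅, A_{l+1} = [n] some
   difference A_i \ A_{i-1} (1 <= i <= l+1) contains an edge of H. *)
Definition coloring_face (n : nat) (E : {set {set 'I_n}}) (s : seq {set 'I_n}) : bool :=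
  let t := set0 :: rcons s setT in
  [&& sorted (fun A B : {set 'I_n} => A \proper B) s,
      all (fun A : {set 'I_n} => (A != set0) && (A \proper setT)) s &
      has (fun i => [exists F in E, F \subset (nth setT t i.+1 :\: nth set0 t i)])
          (iota 0 (size s).+1)].

Definition coloring_adj (n : nat) (E : {set {set 'I_n}}) (A B : {set 'I_n}) : Prop :=
  coloring_face E [:: A; B] \/ coloring_face E [:: B; A].

(* Δ_H is connected: any two vertices of Δ_H (0-faces) are joined by a path
   of 1-faces. (Vacuously true when Δ_H has no vertices.) *)
Definition coloring_connected (n : nat) (E : {set {set 'I_n}}) : Prop :=
  forall A B : {set 'I_n}, coloring_face E [:: A] -> coloring_face E [:: B] ->
    clos_refl_trans _ (@coloring_adj n E) A B.

Definition edge_step (n : nat) (F G : {set 'I_n}) : bool :=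
  (F :|: G != setT) || [disjoint F & G].

(* A vertex A of Δ_H is a 2-colouring (A, ~A) of [n] with a monochromatic edge,
   and comparable vertices A ⊊ B span a 1-face iff some edge is monochromatic for
   both colourings.  Along a path in Δ_H, consecutive vertices thus share a
   monochromatic edge, and two edges monochromatic for one proper colouring have
   union ≠ [n] or are disjoint.  Conversely such a step F_i, F_{i+1} joins F_{i+1}
   to F_i (through F_i ∪ F_{i+1}) or to ~F_i in Δ_H; as complementation is an
   automorphism of Δ_H and every vertex is joined to a monochromatic edge or to its
   complement, it suffices to join one edge F to ~F.  This is possible when
   |~F| ≥ 2, and a step between two distinct edges provides such an F. *)

From mathcomp Require Import all_boot.
From Stdlib Require Import Relations.
Set Implicit Arguments. Unset Strict Implicit. Unset Printing Implicit Defensive.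

Lemma setC_eq0 (T : finType) (A : {set T}) : (~: A == set0) = (A == setT).
Proof. by rewrite -setCT (inj_eq (@setC_inj _)). Qed.

Lemma setC_eqT (T : finType) (A : {set T}) : (~: A == setT) = (A == set0).
Proof. by rewrite -setC0 (inj_eq (@setC_inj _)). Qed.

Section ColoringComplex.

Variables (n : nat) (E : {set {set 'I_n}}).

Definition monochromatic (X G : {set 'I_n}) := (G \subset X) || (G \subset ~: X).

Local Notation linked := (clos_refl_trans _ (coloring_adj E)).

Lemma coloring_vertexP (A : {set 'I_n}) :
  reflect [/\ A != set0, A != setT & exists2 G, G \in E & monochromatic A G]
          (coloring_face E [:: A]).
Proof.
rewrite /coloring_face /= setD0 setTD andbT orbF properT.
rewrite -andbA; apply: (iffP and3P) => [[-> -> /orP h]|[-> -> [G GE hG]]]; split=> //.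
- by case: h => /exists_inP[G GE hG]; exists G; rewrite // /monochromatic hG ?orbT.
- by case/orP: hG => hG; apply/orP; [left|right]; apply/exists_inP; exists G.
Qed.

Lemma coloring_edgeP (A B : {set 'I_n}) :
  reflect [/\ A \proper B, A != set0, B != setT &
           exists2 G, G \in E & [|| G \subset A, G \subset B :\: A | G \subset ~: B]]
          (coloring_face E [:: A; B]).
Proof.
rewrite /coloring_face /= setD0 setTD !andbT orbF !properT.
apply: (iffP and3P) => [[pAB /and3P[/andP[A0 _] _ BT] h]|[pAB A0 BT [G GE hG]]].
- split=> //; case/or3P: h => /exists_inP[G GE hG]; exists G; rewrite // hG ?orbT //.
- have AT : A != setT by apply: contraTneq pAB => ->; rewrite properE subsetT andbF.
  have B0 : B != set0 by apply: contraTneq pAB => ->; rewrite properE sub0set andbF.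
  rewrite pAB A0 AT B0 BT; split=> //.
  by case/or3P: hG => hG; apply/or3P; [constructor 1|constructor 2|constructor 3];
    apply/exists_inP; exists G.
Qed.

Lemma linked_sym (A B : {set 'I_n}) : linked A B -> linked B A.
Proof.
elim=> [X Y [h|h]|X|X Y Z _ hXY _ hYZ].
- by apply: rt_step; right.
- by apply: rt_step; left.
- exact: rt_refl.
- exact: rt_trans hYZ hXY.
Qed.

Lemma linked_subset (A B G : {set 'I_n}) :
  A \subset B -> A != set0 -> B != setT -> G \in E ->
  [|| G \subset A, G \subset B :\: A | G \subset ~: B] -> linked A B.
Proof.
move=> sAB A0 BT GE hG; have [<-|nAB] := eqVneq A B; first exact: rt_refl.
by apply/rt_step; left; apply/coloring_edgeP; split; rewrite ?properEneq ?nAB //; exists G.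
Qed.

Lemma coloring_face_compl (A B : {set 'I_n}) :
  coloring_face E [:: A; B] -> coloring_face E [:: ~: B; ~: A].
Proof.
case/coloring_edgeP=> pAB A0 BT [G GE hG]; apply/coloring_edgeP.
rewrite properC setC_eq0 setC_eqT setCK setDE setCK setIC -setDE; split=> //.
by exists G => //; case/or3P: hG => ->; rewrite ?orbT.
Qed.

Lemma linked_compl (A B : {set 'I_n}) : linked A B -> linked (~: A) (~: B).
Proof.
elim=> [X Y [h|h]|X|X Y Z _ hXY _ hYZ].
- by apply: rt_step; right; apply: coloring_face_compl.
- by apply: rt_step; left; apply: coloring_face_compl.
- exact: rt_refl.
- exact: rt_trans hXY hYZ.
Qed.

Lemma coloring_adj_nontrivial (A B : {set 'I_n}) :
  coloring_adj E A B -> B != set0 /\ B != setT.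
Proof.
by case; rewrite /coloring_face /= !properT => /and3P[_ /and3P[] /andP[? ?] /andP[? ?]].
Qed.

Lemma coloring_adj_monochromatic (A B : {set 'I_n}) : coloring_adj E A B ->
  exists2 G, G \in E & monochromatic A G && monochromatic B G.
Proof.
have face_mono X Y : coloring_face E [:: X; Y] ->
    exists2 G, G \in E & monochromatic X G && monochromatic Y G.
  case/coloring_edgeP=> /proper_sub sXY _ _ [G GE hG]; exists G => //.
  rewrite /monochromatic; case/or3P: hG => hG.
  - by rewrite hG (subset_trans hG sXY).
  - by move: hG; rewrite subsetD disjoints_subset => /andP[-> ->]; rewrite orbT.
  - by rewrite hG (subset_trans hG (_ : ~: Y \subset ~: X)) ?orbT // setCS.
by case=> /face_mono[G GE hG]; exists G; rewrite // andbC.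
Qed.

Lemma monochromatic_edge_step (X G G' : {set 'I_n}) : X != set0 -> X != setT ->
  monochromatic X G -> monochromatic X G' -> edge_step G G'.
Proof.
rewrite /monochromatic /edge_step disjoints_subset => X0 XT.
case/orP=> hG /orP[] hG'.
- by apply/orP; left; apply: contraNneq XT => U; rewrite eqEsubset subsetT -U subUset hG.
- by rewrite (subset_trans hG) ?orbT // subsetC.
- by rewrite (subset_trans hG) ?orbT // setCS.
- apply/orP; left; apply: contraNneq X0 => U.
  by rewrite -setC_eqT eqEsubset subsetT -U subUset hG.
Qed.

Definition edge_reachable (F F' : {set 'I_n}) :=
  exists s : seq {set 'I_n},
    [/\ all (fun G => G \in E) s, path (@edge_step n) F s & last F s = F'].

Lemma edge_reachable_step (F F' : {set 'I_n}) :
  F' \in E -> edge_step F F' -> edge_reachable F F'.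
Proof. by move=> F'E st; exists [:: F']; rewrite /= F'E st. Qed.

Lemma edge_reachable_trans (F G F' : {set 'I_n}) :
  edge_reachable F G -> edge_reachable G F' -> edge_reachable F F'.
Proof.
move=> [s1 [E1 p1 <-]] [s2 [E2 p2 <-]]; exists (s1 ++ s2).
by rewrite all_cat cat_path last_cat E1 E2 p1 p2.
Qed.

Lemma linked_edge_reachable (A B G G' : {set 'I_n}) : linked A B ->
  A != set0 -> A != setT -> G' \in E ->
  monochromatic A G -> monochromatic B G' -> edge_reachable G G'.
Proof.
move/clos_rt_rt1n_iff=> hAB; elim: hAB G => {A B} [A|A M B hAM _ IH] G A0 AT G'E hA hB.
  exact/edge_reachable_step/(monochromatic_edge_step A0 AT hA hB).
have [H HE /andP[hAH hMH]] := coloring_adj_monochromatic hAM.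
have [M0 MT] := coloring_adj_nontrivial hAM.
apply: (@edge_reachable_trans _ H).
  exact/edge_reachable_step/(monochromatic_edge_step A0 AT hA hAH).
exact: IH M0 MT G'E hMH hB.
Qed.

Hypothesis edge_neq0 : forall F, F \in E -> F != set0.
Hypothesis edge_card_neq1 : forall F, F \in E -> #|F| != 1%N.
Hypothesis edge_cover : forall x : 'I_n, exists2 F, F \in E & x \in F.
Hypothesis edge_antichain : forall F G, F \in E -> G \in E -> ~~ (F \proper G).

Lemma edge_eqT (G : {set 'I_n}) : setT \in E -> G \in E -> G = setT.
Proof. by move=> TE GE; apply/eqP; move: (edge_antichain GE TE); rewrite properT negbK. Qed.

Lemma edge_coloring_vertex (F : {set 'I_n}) :
  F \in E -> F != setT -> coloring_face E [:: F].
Proof.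
move=> FE FT; apply/coloring_vertexP; split; rewrite ?edge_neq0 //.
by exists F; rewrite // /monochromatic subxx.
Qed.

Lemma connected_edge_reachable : coloring_connected E ->
  forall F F' : {set 'I_n}, F \in E -> F' \in E -> edge_reachable F F'.
Proof.
move=> conn F F' FE F'E; have [FT|FT] := eqVneq F setT.
  by exists [::]; rewrite (edge_eqT _ F'E) -?FT.
have F'T : F' != setT by apply: contraNneq FT => F'T; rewrite (edge_eqT _ FE) -?F'T.
apply: (linked_edge_reachable (conn F F' _ _));
  by rewrite ?edge_coloring_vertex ?edge_neq0 // /monochromatic subxx.
Qed.

Lemma linked_monochromatic (X G : {set 'I_n}) : X != set0 -> X != setT -> G \in E ->
  monochromatic X G -> linked X G \/ linked X (~: G).
Proof.
move=> X0 XT GE /orP[sGX|sXG]; [left|right].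
  by apply/linked_sym/(linked_subset sGX (edge_neq0 GE) XT GE); rewrite subxx.
apply: (linked_subset _ X0 _ GE); first by rewrite subsetC.
  by rewrite setC_eqT edge_neq0.
by rewrite setCK subxx !orbT.
Qed.

Lemma linked_edge_step (H G : {set 'I_n}) : H \in E -> G \in E ->
  edge_step H G -> linked G H \/ linked G (~: H).
Proof.
move=> HE GE /orP[U|D]; [left|right].
  apply: (@rt_trans _ _ _ (H :|: G)).
    by apply: (linked_subset (subsetUr H G) (edge_neq0 GE) U GE); rewrite subxx.
  by apply/linked_sym/(linked_subset (subsetUl H G) (edge_neq0 HE) U HE); rewrite subxx.
have sGH : G \subset ~: H by rewrite subsetC -disjoints_subset.
apply: (linked_subset sGH (edge_neq0 GE) _ GE); first by rewrite setC_eqT edge_neq0.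
by rewrite subxx.
Qed.

(* F ⊂ F ∪ {x} ⊃ {x} ⊂ ~F for some x ∉ F, each step witnessed by F itself. *)
Lemma linked_edge_compl (F : {set 'I_n}) : F \in E -> 1 < #|~: F| -> linked F (~: F).
Proof.
move=> FE /card_gt1P[x [y [xF yF xy]]]; rewrite !inE in xF yF.
have F0 := edge_neq0 FE.
have yxF : y \notin x |: F by rewrite !inE negb_or eq_sym xy.
have xFT : x |: F != setT by apply: contraNneq yxF => ->; rewrite inE.
have x0 : [set x] != set0 by apply/set0Pn; exists x; rewrite inE.
apply: (@rt_trans _ _ _ (x |: F)).
  by apply: (linked_subset (subsetU1 x F) F0 xFT FE); rewrite subxx.
apply: (@rt_trans _ _ _ [set x]).
  apply/linked_sym/(linked_subset _ x0 xFT FE); first by rewrite sub1set setU11.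
  by rewrite subsetD1 subsetU1 xF orbT.
apply: (linked_subset _ x0 _ FE); first by rewrite sub1set inE.
  by rewrite setC_eqT.
by rewrite setCK subxx !orbT.
Qed.

Lemma edge_step_card_compl (H H' : {set 'I_n}) : H \in E -> H' \in E -> H != H' ->
  edge_step H H' -> 1 < #|~: H|.
Proof.
move=> HE H'E nHH' /orP[U|D].
  have sH'H : ~~ (H' \subset H).
    by move: (edge_antichain H'E HE); rewrite properEneq eq_sym nHH'.
  have pH : ~: (H :|: H') \proper ~: H by rewrite properC properUl.
  by apply: leq_ltn_trans (proper_card pH); rewrite card_gt0 setC_eq0.
rewrite disjoints_subset subsetC in D; apply: leq_trans (subset_leq_card D).
by rewrite ltn_neqAle eq_sym edge_card_neq1 // card_gt0 edge_neq0.
Qed.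

Lemma edge_reachable_distinct_step (F F' : {set 'I_n}) : F \in E ->
  edge_reachable F F' -> F != F' ->
  exists H H', [/\ H \in E, H' \in E, H != H' & edge_step H H'].
Proof.
move=> FE [s [sE p <-]]; elim: s F FE sE p => [|G s IH] F FE /=; first by rewrite eqxx.
move=> /andP[GE sE] /andP[st p] nFs.
have [eFG|nFG] := eqVneq F G; last by exists F, G.
by rewrite eFG in nFs; apply: (IH G GE sE p nFs).
Qed.

Lemma exists_edge_card_compl_gt1 (G0 : {set 'I_n}) : G0 \in E -> G0 != setT ->
  (forall F F', F \in E -> F' \in E -> edge_reachable F F') ->
  exists2 F, F \in E & 1 < #|~: F|.
Proof.
move=> G0E G0T reach.
have [x xG0] : exists x, x \in ~: G0 by apply/set0Pn; rewrite setC_eq0.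
have [G GE xG] := edge_cover x.
have nG0G : G0 != G by apply: contraTneq xG => <-; rewrite -in_setC.
have [H [H' [HE H'E nHH' st]]] :=
  edge_reachable_distinct_step G0E (reach _ _ G0E GE) nG0G.
by exists H => //; apply: edge_step_card_compl st.
Qed.

Lemma linked_pair_edge_step (X H G : {set 'I_n}) : H \in E -> G \in E ->
  edge_step H G -> linked H X -> linked (~: H) X -> linked G X /\ linked (~: G) X.
Proof.
move=> HE GE st hH hCH; case: (linked_edge_step HE GE st) => hG.
  by split; [apply: rt_trans hG hH | apply: rt_trans (linked_compl hG) hCH].
split; first exact: rt_trans hG hCH.
by apply: rt_trans (linked_compl hG) _; rewrite setCK.
Qed.

Lemma linked_pair_edge_reachable (X F G : {set 'I_n}) : F \in E ->
  edge_reachable F G -> linked F X -> linked (~: F) X -> linked G X /\ linked (~: G) X.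
Proof.
move=> FE [s [sE p <-]] {G}; elim: s F FE sE p => [|G s IH] F FE //=.
move=> /andP[GE sE] /andP[st p] hF hCF.
by have [hG hCG] := linked_pair_edge_step FE GE st hF hCF; apply: IH GE sE p hG hCG.
Qed.

Lemma edge_reachable_connected :
  (forall F F', F \in E -> F' \in E -> edge_reachable F F') -> coloring_connected E.
Proof.
move=> reach A B /coloring_vertexP[A0 AT [G0 G0E hA]] /coloring_vertexP[B0 BT [G1 G1E hB]].
have G0T : G0 != setT.
  by apply: contraTneq hA => ->; rewrite /monochromatic !subTset setC_eqT negb_or AT A0.
have [F FE Fbig] := exists_edge_card_compl_gt1 G0E G0T reach.
have linkedF G : G \in E -> linked G F /\ linked (~: G) F.
  move=> GE; apply: (linked_pair_edge_reachable FE (reach _ _ FE GE)); first exact: rt_refl.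
  exact/linked_sym/linked_edge_compl.
have vertexF X G : X != set0 -> X != setT -> G \in E -> monochromatic X G -> linked X F.
  move=> X0 XT GE hX; have [hG hCG] := linkedF G GE.
  case: (linked_monochromatic X0 XT GE hX) => h.
    exact: rt_trans h hG.
  exact: rt_trans h hCG.
exact: rt_trans (vertexF A G0 A0 AT G0E hA) (linked_sym (vertexF B G1 B0 BT G1E hB)).
Qed.

End ColoringComplex.

Theorem mainTheorem14 (n : nat) (E : {set {set 'I_n}}) :
  is_hypergraph E ->
  (coloring_connected E <->
   forall F F' : {set 'I_n}, F \in E -> F' \in E ->
     exists s : seq {set 'I_n},
       [/\ all (fun G => G \in E) s, path (@edge_step n) F s & last F s = F']).
Proof.
case=> edge_neq0 edge_cover edge_card_neq1 edge_antichain; split.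
  exact: connected_edge_reachable.
exact: edge_reachable_connected.
Qed.
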